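(* Let $n\ge2$, let $\lambda\in\mathbb{R}$ with $\lambda\neq0$, and let $L$ be the operator on $\mathbb{R}[p_1,\dots,p_n]$ (extended to rational functions in the same way) defined by $L\cdot f(p_1,\dots,p_n) = f(L\cdot p_1,\dots,L\cdot p_n)$, where $L\cdot p_1 = \lambda p_1$ and $L\cdot p_k = \lambda p_k + p_{k-1}$ for $k=2,\dots,n$. Then there exist $n-1$ rational functions $$J_k = \frac{G_k}{p_1^k},\qquad k = 1,\dots,n-1,$$ where each $G_k\in\mathbb{R}[p_1,\dots,p_{k+1}]$ is a polynomial of degree $k$, such that $J_1,\dots,J_{n-1}$ are functionally independent outside an algebraic subvariety of positive codimension and $$L\cdot J_k = J_k + \frac{1}{\lambda^k},\qquad k=1,\dots,n-1.$$ *)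

From HB Require Import structures.
From mathcomp Require Import all_boot all_order all_algebra.
From mathcomp Require Import reals.
From mathcomp.multinomials Require Import mpoly.

Set Implicit Arguments.
Unset Strict Implicit.
Unset Printing Implicit Defensive.

Import Order.TTheory GRing.Theory Num.Theory.
Local Open Scope ring_scope.

(* Variables p_1, ..., p_n are 'X_i for i : 'I_n, with p_(k) = 'X_(k-1). *)

(* The linear substitution L on points of R^n:
   (L x)_1 = lam x_1,  (L x)_k = lam x_k + x_(k-1) for k >= 2.
   For a (rational) function f, (L . f)(x) = f(L x). *)
Definition Lpt (R : ringType) (n : nat) (lam : R) (x : 'I_n -> R) : 'I_n -> R :=
  fun i => lam * x i + (if (i : nat) is k.+1 then
                          (if (k < n)%N =P true is ReflectT hk then x (Ordinal hk) else 0)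
                        else 0).

Definition Jval (R : fieldType) (n : nat) (k : nat) (G : {mpoly R[n]})
  (x0 : 'I_n) (x : 'I_n -> R) : R :=
  meval x G / (x x0) ^+ k.

Definition mpoly_in_first_vars (R : ringType) (n m : nat) (G : {mpoly R[n]}) : Prop :=
  forall mon : 'X_{1..n}, mon \in msupp G -> forall j : 'I_n, (m < j)%N -> mon j = 0%N.

(* Partial derivative d/dp_j of J = G / p_1^k at x (quotient rule), p_1 = 'X_x0. *)
Definition dJval (R : fieldType) (n : nat) (k : nat) (G : {mpoly R[n]})
  (x0 : 'I_n) (j : 'I_n) (x : 'I_n -> R) : R :=
  (meval x (G^`M(j)) * x x0 - k%:R * meval x G * (j == x0)%:R) / (x x0) ^+ k.+1.

From HB Require Import structures.
From mathcomp Require Import all_boot all_order all_algebra.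
From mathcomp Require Import reals.
From mathcomp.multinomials Require Import mpoly.
From mathcomp Require Import ring.
Import Order.TTheory GRing.Theory Num.Theory.
Local Open Scope ring_scope.

(* Put a = lam p_2 / p_1 and b_m = lam^m p_(m+1) / p_1, so that b_0 = 1.  The
   operator L acts by a |-> a + 1 and b_m |-> b_m + b_(m-1).  By Pascal's rule
   the binomial convolution c_k = sum_(j <= k) binom(-a, j) b_(k-j) is therefore
   L-invariant, and J_k = lam^-k (a + c_k) satisfies L J_k = J_k + lam^-k.
   Clearing denominators, J_k = G_k / p_1^k with G_k homogeneous of degree k in
   p_1, ..., p_(k+1), and d G_k / d p_(k+1) = p_1^(k-1).  Hence the Jacobian of
   (J_1, ..., J_(n-1)), restricted to the columns p_2, ..., p_n, is triangular
   with diagonal 1 / p_1, and the J_k are independent wherever p_1 <> 0. *)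

Section VarsLe.
Local Set Implicit Arguments.
Local Unset Strict Implicit.
Context {n : nat} {R : nzRingType}.
Implicit Types (m : nat) (p q : {mpoly R[n]}).

Definition mnm_vars_le m (mon : 'X_{1..n}) :=
  [forall j : 'I_n, (m < j)%N ==> (mon j == 0%N)].

Definition vars_le_pred m : pred {mpoly R[n]} := fun p => all (mnm_vars_le m) (msupp p).
Definition vars_le m : qualifier 0 {mpoly R[n]} := [qualify p | vars_le_pred m p].

Lemma vars_leP m p : reflect (mpoly_in_first_vars m p) (p \is vars_le m).
Proof.
apply: (iffP allP) => [h mon /h /forallP hmon j|h mon /h hmon].
  by move=> /(implyP (hmon j)) /eqP.
by apply/forallP => j; apply/implyP => /hmon ->.
Qed.

Lemma vars_le_subalg_closed m : GRing.subsemialg_closed (vars_le m).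
Proof.
have vars_leE p : (p \is vars_le m) = all (mnm_vars_le m) (msupp p) by [].
split.
- rewrite vars_leE msupp1 /= andbT; apply/forallP => j; by rewrite mnm0E implybT.
- split=> [|p q]; rewrite !vars_leE ?msupp0 // => /allP hp /allP hq.
  by apply/allP => mon /msuppD_le; rewrite mem_cat => /orP[/hp|/hq].
- move=> c p; rewrite !vars_leE => /allP hp; apply/allP => mon /msuppZ_le; exact: hp.
- move=> p q; rewrite !vars_leE => /allP hp /allP hq; apply/allP => mon.
  move=> /msuppM_le /allpairsP [[m1 m2] /= [/hp /forallP h1 /hq /forallP h2 ->]].
  apply/forallP => j; apply/implyP => hj.
  by rewrite mnmDE (eqP (implyP (h1 j) hj)) (eqP (implyP (h2 j) hj)).
Qed.

HB.instance Definition _ m := GRing.isSubalgClosed.Build R {mpoly R[n]} (vars_le_pred m)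
  (vars_le_subalg_closed m).

Lemma vars_leX m (j : 'I_n) : (j <= m)%N -> 'X_j \is vars_le m.
Proof.
move=> jm; apply/vars_leP => mon; rewrite msuppX inE => /eqP -> l ml.
by rewrite mnm1E; case: eqP => // jl; rewrite jl leqNgt ml in jm.
Qed.

Lemma mderiv_vars_le m p (j : 'I_n) : p \is vars_le m -> (m < j)%N -> p^`M(j) = 0.
Proof.
move=> /vars_leP hp mj; apply/mpolyP => mon; rewrite mcoeff_deriv mcoeff0.
have [/hp /(_ j mj)|/memN_msupp_eq0 ->] := boolP (mon + U_(j) \in msupp p)%MM.
  by rewrite mnmDE mnm1E eqxx addn1.
by rewrite mul0rn.
Qed.

Lemma mderivXX (j : 'I_n) : ('X_j : {mpoly R[n]})^`M(j) = 1.
Proof.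
rewrite mderivX mnm1E eqxx scale1r -mpolyX0; congr 'X_[_].
by apply/mnmP => i; rewrite mnmBE subnn mnm0E.
Qed.

Lemma mderiv_mulX_vars_le m p (j : 'I_n) :
  p \is vars_le m -> (m < j)%N -> (p * 'X_j)^`M(j) = p.
Proof.
by move=> pm mj; rewrite mderivM (mderiv_vars_le pm mj) mderivXX mul0r mulr1 add0r.
Qed.
End VarsLe.

Lemma dJval_vars_le (F : fieldType) n k m (G : {mpoly F[n]}) (x0 j : 'I_n) x :
  G \is vars_le m -> (m < j)%N -> j != x0 -> dJval k G x0 j x = 0.
Proof.
move=> Gm mj jx0; rewrite /dJval (mderiv_vars_le Gm mj) meval0 mul0r.
by rewrite (negbTE jx0) mulr0 subrr mul0r.
Qed.

Section Homog.
Context {n : nat} {R : nzRingType}.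

Lemma dhomog_prod1 k (F : 'I_k -> {mpoly R[n]}) :
  (forall i, F i \is 1.-homog) -> \prod_(i < k) F i \is k.-homog.
Proof.
elim: k F => [|k IH] F hF; first by rewrite big_ord0 dhomog1.
rewrite big_ord_recr /=.
have := dhomogM (IH _ (fun i => hF (widen_ord (leqnSn k) i))) (hF ord_max).
by rewrite addn1; apply.
Qed.

Lemma msize_dhomog d (p : {mpoly R[n]}) : p != 0 -> p \is d.-homog -> msize p = d.+1.
Proof.
move=> p0 hp; rewrite (dhomog_uniq p0 hp (dhomog_msize hp)) prednK //.
by rewrite lt0n msize_poly_eq0.
Qed.
End Homog.

Lemma rank_trig_lift (F : fieldType) m (A : 'M[F]_(m, m.+1)) :
  (forall i j : 'I_m, (i < j)%N -> A i (lift ord0 j) = 0) ->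
  (forall i, A i (lift ord0 i) != 0) -> \rank A = m.
Proof.
move=> Atrig Adiag; apply/eqP; rewrite eqn_leq rank_leq_row /=.
have A_sub_unit : colsub (lift ord0) A \in unitmx.
  rewrite unitmxE unitfE det_trig; first by apply/prodf_neq0 => i _; rewrite mxE.
  by apply/is_trig_mxP => i j ij; rewrite mxE Atrig.
apply: leq_trans (mxrankM_maxl A (colsub (lift ord0) 1%:M)).
by rewrite mulmx_colsub mulmx1 (mxrank_unit A_sub_unit).
Qed.

Section GeneralizedBinomial.
Context {F : numFieldType}.
Implicit Types (s : F) (b c : nat -> F).

Definition binr s j := (j`!%:R)^-1 * \prod_(i < j) (s - i%:R).

Lemma binr0 s : binr s 0 = 1.
Proof. by rewrite /binr big_ord0 fact0 invr1 mulr1. Qed.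

Lemma binrS s j : binr s j.+1 = binr (s - 1) j.+1 + binr (s - 1) j.
Proof.
rewrite /binr big_ord_recl big_ord_recr /= subr0 factS natrM.
have -> : \prod_(i < j) (s - (bump 0 i)%:R) = \prod_(i < j) (s - 1 - i%:R).
  by apply: eq_bigr => i _; rewrite /bump add1n -addn1 natrD opprD addrAC addrA.
have fact_neq0 : (j`!%:R : F) != 0 by rewrite pnatr_eq0 -lt0n fact_gt0.
by field; rewrite fact_neq0 addrC natr1 pnatr_eq0.
Qed.

(* Coefficientwise, (1 + X)^(s-1) * ((1 + X) B(X)) = (1 + X)^s * B(X). *)
Lemma binr_convolution_shift s b c k :
  c 0%N = b 0%N -> (forall m, (0 < m <= k)%N -> c m = b m + b m.-1) ->
  \sum_(j < k.+1) binr (s - 1) j * c (k - j)%N = \sum_(j < k.+1) binr s j * b (k - j)%N.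
Proof.
move=> c0 cS.
have -> : \sum_(j < k.+1) binr (s - 1) j * c (k - j)%N =
    \sum_(j < k.+1) binr (s - 1) j * b (k - j)%N
  + \sum_(j < k) binr (s - 1) j * b (k - j.+1)%N.
  rewrite big_ord_recr /= subnn c0 [in RHS]big_ord_recr /= subnn addrAC.
  congr (_ + _); rewrite -big_split /=; apply: eq_bigr => i _.
  by rewrite cS ?subn_gt0 ?ltn_ord ?leq_subr // mulrDr -subnS.
rewrite [RHS]big_ord_recl [X in X + _]big_ord_recl /= !binr0 -addrA; congr (_ + _).
by rewrite -big_split; apply: eq_bigr => i _; rewrite /bump leq0n add1n (binrS s) mulrDl.
Qed.
End GeneralizedBinomial.

Section LShift.
Local Set Implicit Arguments.
Local Unset Strict Implicit.
Context {F : numFieldType} (lam : F).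
Implicit Types (s : nat -> F).

Definition trans_coord s := lam * s 1%N / s 0%N.
Definition scaled_ratio s m := lam ^+ m * s m / s 0%N.
Definition binr_conv s k :=
  \sum_(j < k.+1) binr (- trans_coord s) j * scaled_ratio s (k - j).

Lemma scaled_ratio0 s : s 0%N != 0 -> scaled_ratio s 0 = 1.
Proof. by move=> s0; rewrite /scaled_ratio expr0 mul1r divff. Qed.

Variables (k : nat) (s t : nat -> F).
Hypotheses (lam0 : lam != 0) (s0 : s 0%N != 0).
Hypotheses (t0 : t 0%N = lam * s 0%N)
  (tS : forall m, (m < k)%N -> t m.+1 = lam * s m.+1 + s m).

Lemma scaled_ratio_Lshift m : (0 < m <= k)%N ->
  scaled_ratio t m = scaled_ratio s m + scaled_ratio s m.-1.
Proof.
case: m => // m /= mk; rewrite /scaled_ratio tS // t0 exprS.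
by field; rewrite s0 lam0.
Qed.

Lemma trans_coord_Lshift : (0 < k)%N -> trans_coord t = trans_coord s + 1.
Proof. by move=> k0; rewrite /trans_coord tS // t0; field; rewrite s0 lam0. Qed.

Lemma binr_conv_Lshift : (0 < k)%N -> binr_conv t k = binr_conv s k.
Proof.
move=> k0; rewrite /binr_conv trans_coord_Lshift // opprD.
apply: binr_convolution_shift; first by rewrite !scaled_ratio0 // t0 mulf_neq0.
exact: scaled_ratio_Lshift.
Qed.
End LShift.

Section Invariants.
Local Set Implicit Arguments.
Local Unset Strict Implicit.
Variables (F : numFieldType) (N : nat) (lam : F).
Hypothesis lam0 : lam != 0.

(* ['p_j] is the variable p_(j+1) of the paper. *)
Local Notation "''p_' j" := ('X_(inord j) : {mpoly F[N.+1]})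
  (at level 8, j at level 2, format "''p_' j").

Definition ptseq (v : 'I_N.+1 -> F) (j : nat) := v (inord j).

(* [binr_form j] is p_1^j binr(-a, j), and [Jnumer k] is p_1^k J_k = (p_1 / lam)^k (a + c_k)
   with a = [trans_coord] and c_k = [binr_conv]. *)
Definition binr_form j : {mpoly F[N.+1]} :=
  (j`!%:R)^-1 *: \prod_(i < j) (- lam *: 'p_1 - i%:R *: 'p_0).

Definition Jnumer k : {mpoly F[N.+1]} :=
  lam ^- k *: (lam *: ('p_0 ^+ k.-1 * 'p_1)
    + \sum_(j < k) lam ^+ (k - j) *: (binr_form j * 'p_0 ^+ (k - j.+1) * 'p_(k - j))
    + binr_form k).

Lemma meval_p v j : meval v 'p_j = ptseq v j.
Proof. exact: mevalXU. Qed.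

Lemma meval_binr_form v j : ptseq v 0 != 0 ->
  meval v (binr_form j) = ptseq v 0 ^+ j * binr (- trans_coord lam (ptseq v)) j.
Proof.
move=> v0; rewrite mevalZ (big_morph _ (mevalM v) (meval1 v)) /binr mulrCA.
have -> : ptseq v 0 ^+ j = \prod_(i < j) ptseq v 0 by rewrite prodr_const card_ord.
rewrite -big_split /=; congr (_ * _).
by apply: eq_bigr => i _; rewrite mevalB !mevalZ !meval_p /trans_coord; field.
Qed.

Lemma meval_Jnumer v k : (0 < k)%N -> ptseq v 0 != 0 ->
  meval v (Jnumer k) =
  (ptseq v 0 / lam) ^+ k * (trans_coord lam (ptseq v) + binr_conv lam (ptseq v) k).
Proof.
case: k => // k _ v0.
have sum_eq : meval v (\sum_(j < k.+1)
      lam ^+ (k.+1 - j) *: (binr_form j * 'p_0 ^+ (k.+1 - j.+1) * 'p_(k.+1 - j)))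
    = ptseq v 0 ^+ k.+1 * \sum_(j < k.+1)
        binr (- trans_coord lam (ptseq v)) j * scaled_ratio lam (ptseq v) (k.+1 - j).
  rewrite raddf_sum /= mulr_sumr; apply: eq_bigr => j _.
  rewrite mevalZ !mevalM rmorphXn /= !meval_p meval_binr_form // /scaled_ratio subSS.
  have -> : ptseq v 0 ^+ k.+1 = ptseq v 0 ^+ j * ptseq v 0 ^+ (k - j) * ptseq v 0.
    by rewrite -exprD subnKC ?exprSr // -ltnS.
  by field.
rewrite /Jnumer mevalZ !mevalD sum_eq mevalZ mevalM rmorphXn /= !meval_p.
rewrite meval_binr_form // /binr_conv [in RHS]big_ord_recr /= subnn scaled_ratio0 //.
rewrite /trans_coord exprMn exprVn !exprSr.
by field; rewrite v0 lam0 expf_neq0.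
Qed.

Lemma Jval_Jnumer v k : (0 < k)%N -> ptseq v 0 != 0 ->
  Jval k (Jnumer k) (inord 0) v =
  lam ^- k * (trans_coord lam (ptseq v) + binr_conv lam (ptseq v) k).
Proof.
move=> k0 v0; rewrite /Jval meval_Jnumer // -/(ptseq v 0) exprMn exprVn.
by field; rewrite !expf_neq0.
Qed.

Lemma ptseq_Lpt0 x : ptseq (Lpt lam x) 0 = lam * ptseq x 0.
Proof. by rewrite /ptseq /Lpt inordK // addr0. Qed.

Lemma ptseq_LptS x m : (m < N)%N ->
  ptseq (Lpt lam x) m.+1 = lam * ptseq x m.+1 + ptseq x m.
Proof.
move=> mN; rewrite /ptseq /Lpt inordK //; case: eqP => [mN'|]; last by rewrite ltnW.
by congr (_ + x _); apply: val_inj; rewrite /= inordK // ltnW.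
Qed.

Lemma Jval_Lpt k x : (0 < k <= N)%N -> ptseq x 0 != 0 ->
  Jval k (Jnumer k) (inord 0) (Lpt lam x) = Jval k (Jnumer k) (inord 0) x + 1 / lam ^+ k.
Proof.
move=> /andP[k0 kN] x0.
have LxS m : (m < k)%N -> ptseq (Lpt lam x) m.+1 = lam * ptseq x m.+1 + ptseq x m.
  by move=> mk; apply: ptseq_LptS; apply: leq_trans kN.
have Lx0 : ptseq (Lpt lam x) 0 != 0 by rewrite ptseq_Lpt0 mulf_neq0.
rewrite !Jval_Jnumer // (trans_coord_Lshift lam0 x0 (ptseq_Lpt0 x) LxS k0).
rewrite (binr_conv_Lshift lam0 x0 (ptseq_Lpt0 x) LxS k0).
by field; rewrite expf_neq0.
Qed.

Lemma p_homog j : 'p_j \is 1.-homog.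
Proof. by rewrite dhomogX; apply/mdeg1P; exists (inord j). Qed.

Lemma inord_leq j : ((inord j : 'I_N.+1) <= j)%N.
Proof.
case: (leqP j N) => [jN|Nj]; first by rewrite inordK.
exact: ltnW (leq_trans (ltn_ord _) Nj).
Qed.

Lemma p_vars_le j m : (j <= m)%N -> 'p_j \is vars_le m.
Proof. by move=> jm; apply: vars_leX; apply: leq_trans (inord_leq j) jm. Qed.

Lemma p_expr_neq0 j e : 'p_j ^+ e != 0.
Proof.
apply/eqP => /(congr1 (meval (fun=> 1))); rewrite rmorphXn /= meval_p expr1n meval0.
by move/eqP; rewrite oner_eq0.
Qed.

Lemma binr_form0 : binr_form 0 = 1.
Proof. by rewrite /binr_form big_ord0 fact0 invr1 scale1r. Qed.

Lemma binr_form_homog j : binr_form j \is j.-homog.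
Proof. by apply/rpredZ/dhomog_prod1 => i; rewrite rpredB ?rpredZ ?p_homog. Qed.

Lemma binr_form_vars_le j m : (0 < m)%N -> binr_form j \is vars_le m.
Proof.
by move=> m0; apply/rpredZ/rpred_prod => i _; rewrite rpredB ?rpredZ ?p_vars_le.
Qed.

Lemma Jnumer_homog k : (0 < k)%N -> Jnumer k \is k.-homog.
Proof.
move=> k0; apply/rpredZ; rewrite rpredD //; first rewrite rpredD //.
- apply/rpredZ; have := dhomogM (dhomogMn k.-1 (p_homog 0)) (p_homog 1).
  by rewrite mul1n addn1 prednK.
- apply: rpred_sum => j _; apply/rpredZ.
  have := dhomogM (dhomogM (binr_form_homog j) (dhomogMn (k - j.+1) (p_homog 0)))
    (p_homog (k - j)).
  by rewrite mul1n addn1 -addSn subnKC.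
- exact: binr_form_homog.
Qed.

Lemma Jnumer_vars_le k : (0 < k)%N -> Jnumer k \is vars_le k.
Proof.
move=> k0; apply/rpredZ; rewrite rpredD //; first rewrite rpredD //.
- by rewrite rpredZ // rpredM ?rpredX ?p_vars_le.
- apply: rpred_sum => j _.
  by rewrite rpredZ // !rpredM ?rpredX ?binr_form_vars_le ?p_vars_le ?leq_subr.
- exact: binr_form_vars_le.
Qed.

Lemma Jnumer1 : Jnumer 1 = 'p_1.
Proof.
rewrite /Jnumer /binr_form big_ord1 big_ord0 big_ord1 /= subn0 !expr0 !mul1r mulr1.
rewrite mulr_algl fact0 invr1 !scale1r expr1 scale0r subr0 -!scalerDl scalerA.
by rewrite addrK mulVf // scale1r.
Qed.

(* For k >= 2 only the j = 0 summand of [Jnumer k] involves p_(k+1); for k = 1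
   the variable p_2 also occurs in a and in [binr_form 1], hence [Jnumer1]. *)
Lemma mderiv_Jnumer k : (0 < k <= N)%N -> (Jnumer k)^`M(inord k) = 'p_0 ^+ k.-1.
Proof.
case: k => [|[_|k]] //; first by rewrite Jnumer1 mderivXX.
move=> /andP[_ kN]; have k1_lt : (k.+1 < (inord k.+2 : 'I_N.+1))%N by rewrite inordK.
have one_lt : (1 < (inord k.+2 : 'I_N.+1))%N by apply: leq_trans k1_lt.
rewrite /Jnumer big_ord_recl /= subn0 binr_form0 mul1r.
set A := (X in _ *: (X + _ + _)); set S := (X in _ *: (_ + (_ + X) + _)).
have A_vars : A \is vars_le 1 by rewrite rpredZ // rpredM ?rpredX ?p_vars_le.
have S_vars : S \is vars_le k.+1.
  apply: rpred_sum => i _.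
  have ki : (k.+2 - bump 0 i <= k.+1)%N by rewrite /bump leq0n add1n subSS leq_subr.
  by rewrite rpredZ // !rpredM ?rpredX ?binr_form_vars_le ?p_vars_le.
have B_vars : binr_form k.+2 \is vars_le 1 by exact: binr_form_vars_le.
have P_vars : 'p_0 ^+ k.+1 \is vars_le k.+1 by rewrite rpredX ?p_vars_le.
rewrite mderivZ !mderivD (mderiv_vars_le A_vars one_lt) mderivZ.
rewrite (mderiv_vars_le S_vars k1_lt) (mderiv_vars_le B_vars one_lt).
rewrite subSS subn0 (mderiv_mulX_vars_le P_vars k1_lt).
by rewrite !addr0 add0r scalerA mulVf ?scale1r // expf_neq0.
Qed.

Lemma Jnumer_neq0 k : (0 < k <= N)%N -> Jnumer k != 0.
Proof.
move=> kN; apply: contra_neq (p_expr_neq0 0 k.-1) => J0.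
by rewrite -mderiv_Jnumer // J0 mderiv0.
Qed.

Lemma msize_Jnumer k : (0 < k <= N)%N -> msize (Jnumer k) = k.+1.
Proof.
move=> kN; apply: msize_dhomog (Jnumer_neq0 kN) _.
by rewrite Jnumer_homog //; case/andP: kN.
Qed.

Lemma dJval_Jnumer_diag k x : (0 < k <= N)%N -> ptseq x 0 != 0 ->
  dJval k (Jnumer k) (inord 0) (inord k) x = (ptseq x 0)^-1.
Proof.
move=> /andP[k0 kN] x0; rewrite /dJval mderiv_Jnumer ?k0 // rmorphXn /= meval_p.
have -> : (inord k == inord 0 :> 'I_N.+1) = false.
  by apply/negbTE; apply: contraTneq k0 => /(congr1 val); rewrite /= !inordK // => ->.
rewrite mulr0 subr0 -/(ptseq x 0) -exprSr prednK //.
by rewrite exprSr invfM mulrA mulfV ?mul1r // expf_neq0.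
Qed.
End Invariants.

Theorem corollary3 (R : realType) (n : nat) (hn : (2 <= n)%N) (lam : R) (hlam : lam != 0) :
  let x0 : 'I_n := Ordinal (leq_trans (isT : (0 < 2)%N) hn) in
  exists G : 'I_n.-1 -> {mpoly R[n]},
    (* J_k = G_k / p_1^k with k = i+1, G_k in R[p_1..p_(k+1)] of degree k *)
    (forall i : 'I_n.-1, mpoly_in_first_vars i.+1 (G i) /\ msize (G i) = i.+2) /\
    (* L . J_k = J_k + 1/lam^k *)
    (forall (i : 'I_n.-1) (x : 'I_n -> R), x x0 != 0 ->
        Jval i.+1 (G i) x0 (Lpt lam x) = Jval i.+1 (G i) x0 x + 1 / lam ^+ i.+1) /\
    (* functional independence outside a proper algebraic subvariety *)
    (exists Q : {mpoly R[n]}, Q != 0 /\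
       forall x : 'I_n -> R, x x0 != 0 -> meval x Q != 0 ->
         \rank (\matrix_(i < n.-1, j < n) dJval i.+1 (G i) x0 j x) = n.-1).
Proof.
case: n hn => [|N] // hN /=; set x0 := Ordinal _.
have -> : x0 = inord 0 by apply: val_inj; rewrite /= inordK.
have iN (i : 'I_N) : (0 < i.+1 <= N)%N by rewrite ltn_ord.
exists (fun i : 'I_N => Jnumer N lam i.+1); split; [|split].
- by move=> i; split; [apply/vars_leP/Jnumer_vars_le | exact: msize_Jnumer (iN i)].
- by move=> i x; apply: (Jval_Lpt hlam (iN i)).
(* The exceptional variety is p_1 = 0, already excluded by [x x0 != 0]. *)
exists 1; split => [|x x_0 _]; first exact: oner_neq0.
apply: rank_trig_lift => [i j ij|i]; rewrite mxE.
  apply: (@dJval_vars_le _ _ _ i.+1) => //; first exact: Jnumer_vars_le.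
  by rewrite -(inj_eq val_inj) /= inordK.
have -> : lift ord0 i = inord i.+1 by apply: val_inj; rewrite /= inordK ?ltnS.
by rewrite (dJval_Jnumer_diag hlam (iN i)) // invr_eq0.
Qed.
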